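(* Let $a_1,a_2$ be nonzero integers and $(U_n)_{n\ge0}$ the Lucas sequence with $U_0=0$, $U_1=1$, $U_n=a_1U_{n-1}+a_2U_{n-2}$; let $\alpha,\beta$ be the roots of $X^2-a_1X-a_2$, assume $\alpha/\beta$ is not a root of unity and $\Delta:=a_1^2+4a_2$ is not a square. For every positive integer $d$ and every $x>1$, \[ \mathcal{R}_U(d;x)=\sum_{v\mid d^\infty}\sum_{a\mid d}\mu(a)\,\pi_{U,dv,av}(x), \] where the primes dividing $a_2\Delta$ are ignored in all counts.
   Context: $\rho_U(p)$ is the smallest positive integer $k$ with $p\mid U_k$; for $p\nmid a_2\Delta$, $\iota_U(p):=\big(p-\big(\tfrac{\Delta}{p}\big)\big)/\rho_U(p)$, with $\big(\tfrac{\Delta}{p}\big)$ the Legendre symbol. $\mathcal{R}_U(d;x):=\#\{p\le x:\ p\nmid a_2,\ d\mid\rho_U(p)\}$. For positive integers $m\mid n$, $\pi_{U,n,m}(x):=\#\{p\le x:\ p\nmid a_2\Delta,\ p\equiv\big(\tfrac{\Delta}{p}\big)\pmod n,\ m\mid\iota_U(p)\}$. The sum over $v\mid d^\infty$ runs over all positive integers $v$ all of whose prime factors divide $d$. $\mu$ is the Möbius function. *)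

From HB Require Import structures.
From mathcomp Require Import all_boot all_order all_algebra all_field.
From mathcomp Require Import boolp reals.
Set Implicit Arguments. Unset Strict Implicit. Unset Printing Implicit Defensive.
Import Order.TTheory GRing.Theory Num.Theory.
Local Open Scope ring_scope.

Fixpoint lucasU (a1 a2 : int) (n : nat) : int * int :=
  (* returns (U_n, U_{n+1}) *)
  match n with
  | 0%N => (0, 1)
  | k.+1 => let: (u, u') := lucasU a1 a2 k in (u', a1 * u' + a2 * u)
  end.
Definition U (a1 a2 : int) (n : nat) : int := (lucasU a1 a2 n).1.

Definition disc (a1 a2 : int) : int := a1 ^+ 2 + 4 * a2.

(* rho_U(p): the smallest positive k with p | U_k (0 if there is none). *)
Definition rho (a1 a2 : int) (p : nat) : nat :=
  match pselect (exists k, (0 < k)%N && (p%:Z %| U a1 a2 k)%Z) with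
  | left h => ex_minn h
  | right _ => 0%N
  end.

(* Legendre symbol (D/p) for an odd prime p (literal definition: 0 if p | D,
   1 if D is a nonzero square mod p, -1 otherwise); for p = 2 we use the
   Kronecker symbol convention. *)
Definition legendre (D : int) (p : nat) : int :=
  if (p%:Z %| D)%Z then 0
  else if p == 2%N then
         (if ((D %% 8)%Z == 1) || ((D %% 8)%Z == 7) then 1 else -1)
  else if [exists y : 'I_p, (p%:Z %| (y%:Z) ^+ 2 - D)%Z] then 1 else -1.

Definition iotaU (a1 a2 : int) (p : nat) : int :=
  ((p%:Z - legendre (disc a1 a2) p) %/ (rho a1 a2 p)%:Z)%Z.

Definition prime_count (R : realType) (x : R) (P : pred nat) : nat :=
  \sum_(p < (Num.truncn x).+1 | prime p && (p%:R <= x) && P p) 1%N.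

Definition RU (a1 a2 : int) (d : nat) (R : realType) (x : R) : nat :=
  prime_count x (fun p => ~~ (p%:Z %| a2 * disc a1 a2)%Z && (d %| rho a1 a2 p)%N).

Definition piU (a1 a2 : int) (n m : nat) (R : realType) (x : R) : nat :=
  prime_count x (fun p => [&& ~~ (p%:Z %| a2 * disc a1 a2)%Z,
                              (p%:Z == legendre (disc a1 a2) p %[mod n%:Z])%Z
                            & (m%:Z %| iotaU a1 a2 p)%Z]).

Definition moebius (n : nat) : int :=
  if (0 < n)%N && all (fun p => logn p n == 1%N) (primes n)
  then (-1) ^+ size (primes n) else 0.

(* v | d^oo : v is a positive integer all of whose prime factors divide d *)
Definition dinf (d v : nat) : bool := (0 < v)%N && all (fun p => (p %| d)%N) (primes v).

From HB Require Import structures.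
From mathcomp Require Import all_boot all_order all_algebra all_field.
From mathcomp Require Import boolp reals.
From mathcomp Require Import zify ring.
Import Order.TTheory GRing.Theory Num.Theory.
Local Open Scope ring_scope.

(* For a prime p not dividing a2 * Delta put n = p - (Delta/p).  Over an
   algebraic closure of F_p, Frobenius fixes the roots alpha, beta of
   X^2 - a1 X - a2 when Delta is a square mod p and swaps them otherwise; in
   both cases alpha^n = beta^n, i.e. p | U_n.  The zeros of U mod p are the
   multiples of the rank r = rho(p), so n = i * r with i = iota(p), and the
   conditions defining pi_{U,dv,av} read dv | n and av | i.  For fixed p,
   Moebius inversion over a | d leaves only the term v = i_{pi(d)} (the d-part
   of i), and d * i_{pi(d)} | i * r holds exactly when d | r.  Summing over p
   gives R_U(d;x); the sum over v is finite since v <= n <= p + 1. *)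

Section LucasSequence.
Variables a1 a2 : int.

Lemma lucasUE n : lucasU a1 a2 n = (U a1 a2 n, U a1 a2 n.+1).
Proof. by elim: n => [//|n IH]; rewrite /U /= IH. Qed.

Lemma U0 : U a1 a2 0 = 0. Proof. by []. Qed.

Lemma U1 : U a1 a2 1 = 1. Proof. by []. Qed.

Lemma U_rec n : U a1 a2 n.+2 = a1 * U a1 a2 n.+1 + a2 * U a1 a2 n.
Proof. by rewrite {1}/U /= lucasUE. Qed.

Lemma U_addS m n :
  U a1 a2 (m + n).+1 = U a1 a2 m.+1 * U a1 a2 n.+1 + a2 * U a1 a2 m * U a1 a2 n.
Proof.
elim: n m => [|n IH] m; first by rewrite addn0 U1 U0 mulr1 mulr0 addr0.
by rewrite addnS -addSn IH !U_rec; ring.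
Qed.

Lemma U_binet (K : comNzRingType) (al be : K) :
  al + be = a1%:~R -> al * be = - a2%:~R ->
  forall n, (U a1 a2 n)%:~R * (al - be) = al ^+ n - be ^+ n.
Proof.
move=> sum_ab mul_ab.
suff binet2 : forall n, (U a1 a2 n)%:~R * (al - be) = al ^+ n - be ^+ n /\
    (U a1 a2 n.+1)%:~R * (al - be) = al ^+ n.+1 - be ^+ n.+1 by move=> n; case: (binet2 n).
elim=> [|n [IH1 IH2]]; first by rewrite U0 U1 mul0r subrr mul1r !expr1.
split=> //; rewrite U_rec rmorphD !rmorphM /= mulrDl -!mulrA IH1 IH2.
by rewrite -sum_ab -[a2%:~R]opprK -mul_ab !exprS; ring.
Qed.

End LucasSequence.

Lemma Fp_intr_eq0 p (z : int) : prime p -> ((z%:~R : 'F_p) == 0) = (p%:Z %| z)%Z.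
Proof. by move=> p_pr; rewrite (dvdz_pcharf (pchar_Fp p_pr)). Qed.

Section RankOfApparition.
Context {a1 a2 : int} {p : nat}.
Hypotheses (p_pr : prime p) (p_a2 : ~~ (p%:Z %| a2)%Z).

Let u k : 'F_p := (U a1 a2 k)%:~R.

Let dvdz_U k : (p%:Z %| U a1 a2 k)%Z = (u k == 0).
Proof. by rewrite Fp_intr_eq0. Qed.

Let a2_neq0 : (a2%:~R : 'F_p) != 0.
Proof. by rewrite Fp_intr_eq0. Qed.

Lemma dvdz_U_consecutive k :
  ~~ ((p%:Z %| U a1 a2 k) && (p%:Z %| U a1 a2 k.+1))%Z.
Proof.
rewrite !dvdz_U /u; elim: k => [|k IH]; first by rewrite U1 oner_eq0 andbF.
apply/negP => /andP[/eqP uk1]; rewrite U_rec rmorphD !rmorphM /= uk1.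
by rewrite mulr0 add0r mulf_eq0 (negbTE a2_neq0) => /= uk; rewrite uk uk1 eqxx in IH.
Qed.

Lemma dvdz_UDl m n : (p%:Z %| U a1 a2 n)%Z ->
  (p%:Z %| U a1 a2 (m + n))%Z = (p%:Z %| U a1 a2 m)%Z.
Proof.
case: n => [|n] pn; first by rewrite addn0.
have pn' : ~~ (p%:Z %| U a1 a2 n)%Z by have := dvdz_U_consecutive n; rewrite pn andbT.
rewrite !dvdz_U /u in pn pn' *.
rewrite addnS addnC U_addS rmorphD !rmorphM /= (eqP pn) mul0r add0r.
by rewrite !mulf_eq0 (negbTE a2_neq0) (negbTE pn').
Qed.

Lemma dvdz_UMl q r : (p%:Z %| U a1 a2 r)%Z -> (p%:Z %| U a1 a2 (q * r))%Z.
Proof.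
move=> pr; elim: q => [|q IH]; first by rewrite mul0n U0 dvdz0.
by rewrite mulSn addnC dvdz_UDl.
Qed.

Lemma rho_dvd k : (0 < k)%N -> (p%:Z %| U a1 a2 k)%Z -> (rho a1 a2 p %| k)%N.
Proof.
move=> k_gt0 pk; rewrite /rho; case: pselect => [ex|]; last by case; exists k; rewrite k_gt0.
case: ex_minnP => r /andP[r_gt0 pr] r_min.
have p_mod : (p%:Z %| U a1 a2 (k %% r))%Z.
  by rewrite -(dvdz_UDl (k %% r) _ (dvdz_UMl (k %/ r) r pr)) addnC -divn_eq.
rewrite /dvdn; case: posnP => // mod_gt0.
by have := r_min _ (introT andP (conj mod_gt0 p_mod)); rewrite leqNgt ltn_mod r_gt0.
Qed.

End RankOfApparition.

Lemma Frobenius_fixed_Fp p (K : fieldType) (phi : {rmorphism 'F_p -> K}) (z : K) :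
  prime p -> z ^+ p = z -> exists c : 'F_p, phi c = z.
Proof.
move=> p_pr zp; suff /existsP[c /eqP <-] : [exists c, phi c == z] by exists c.
apply: contraT => /existsPn z_notin_im.
pose Q : {poly K} := 'X^p - 'X.
have size_Q : size Q = p.+1.
  by rewrite size_polyDl ?size_polyXn // size_polyN size_polyX ltnS prime_gt1.
have Q_neq0 : Q != 0 by rewrite -size_poly_eq0 size_Q.
have root_Q w : w ^+ p = w -> root Q w by move=> wp; rewrite /root !hornerE wp subrr.
have := max_poly_roots Q_neq0 (rs := z :: map phi (enum 'F_p)).
rewrite size_Q /= size_map -cardE card_Fp // ltnn; apply.
  rewrite /= root_Q //=; apply/allP => _ /mapP[c _ ->]; apply: root_Q.
  by rewrite -rmorphXn -{2}(expf_card c) card_Fp.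
rewrite map_inj_uniq ?enum_uniq ?andbT; last exact: fmorph_inj.
by apply/mapP => -[c _ zc]; move: (z_notin_im c); rewrite zc eqxx.
Qed.

Lemma closed_roots_sum_prod {K : closedFieldType} (s t : K) :
  exists al be : K, al + be = s /\ al * be = t.
Proof.
have [al al_root] := @solve_monicpoly K 2 (fun i => if i == 0%N then - t else s) isT.
exists al, (s - al); split; first by rewrite addrC subrK.
move: al_root; rewrite !big_ord_recl big_ord0 /= expr0 expr1 mulr1 addr0 => al_sqr.
by rewrite mulrBr -expr2 al_sqr; ring.
Qed.

Section FrobeniusOnRoots.
Context {K : fieldType} {p : nat} {a1 a2 : int} {al be : K}.
Hypotheses (pK : p \in [pchar K]) (sum_ab : al + be = a1%:~R)
  (mul_ab : al * be = - a2%:~R) (a2_neq0 : a2%:~R != 0 :> K) (al_neq_be : al != be).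

Let be_E : be = a1%:~R - al.
Proof. by rewrite -sum_ab addrAC subrr add0r. Qed.

Let al_neq0 : al != 0.
Proof. by apply: contraNneq a2_neq0 => al0; rewrite -oppr_eq0 -mul_ab al0 mul0r. Qed.

Let be_neq0 : be != 0.
Proof. by apply: contraNneq a2_neq0 => be0; rewrite -oppr_eq0 -mul_ab be0 mulr0. Qed.

Let Frobenius_int (z : int) : (z%:~R : K) ^+ p = z%:~R.
Proof. by rewrite -(pFrobenius_autE pK) rmorph_int. Qed.

Lemma sqr_sub_roots : (al - be) ^+ 2 = (disc a1 a2)%:~R.
Proof.
rewrite /disc rmorphD rmorphM rmorphXn /= -sum_ab -[a2%:~R]opprK -mul_ab; ring.
Qed.

Lemma dvdz_U_pchar m : (p%:Z %| U a1 a2 m)%Z = (al ^+ m == be ^+ m).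
Proof.
have ab_neq0 : al - be != 0 by rewrite subr_eq0.
by rewrite (dvdz_pcharf pK) -(mulIr_eq0 _ (mulIf ab_neq0)) U_binet // subr_eq0.
Qed.

Lemma expp_be : be ^+ p = a1%:~R - al ^+ p.
Proof. by rewrite be_E -!(pFrobenius_autE pK) rmorphB /= rmorph_int. Qed.

Lemma expp_al_fixed_or_swapped : al ^+ p = al \/ al ^+ p = be.
Proof.
have root_al w : w ^+ 2 = a1%:~R * w + a2%:~R -> (w - al) * (w - be) = 0.
  rewrite -[a2%:~R]opprK -mul_ab -sum_ab => w_root.
  by rewrite mulrBr !mulrBl -expr2 w_root; ring.
have al_root : al ^+ 2 = a1%:~R * al + a2%:~R.
  by rewrite -[a2%:~R]opprK -mul_ab -sum_ab; ring.
have /root_al/eqP : (al ^+ p) ^+ 2 = a1%:~R * al ^+ p + a2%:~R.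
  by rewrite -exprM mulnC exprM al_root -!(pFrobenius_autE pK) rmorphD rmorphM /= !rmorph_int.
by rewrite mulf_eq0 !subr_eq0 => /orP[] /eqP; [left | right].
Qed.

Lemma dvdz_U_pred_of_fixed : al ^+ p = al -> (p%:Z %| U a1 a2 p.-1)%Z.
Proof.
have p_gt0 : (0 < p)%N by rewrite prime_gt0 ?(pcharf_prime pK).
move=> al_fixed; have be_fixed : be ^+ p = be by rewrite expp_be al_fixed -be_E.
have expp_pred_1 (w : K) : w != 0 -> w ^+ p = w -> w ^+ p.-1 = 1.
  by move=> w_neq0 w_fixed; apply: (mulIf w_neq0); rewrite mul1r -exprSr prednK.
by rewrite dvdz_U_pchar !expp_pred_1.
Qed.

Lemma dvdz_U_succ_of_swap : al ^+ p = be -> (p%:Z %| U a1 a2 p.+1)%Z.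
Proof.
move=> al_swap; have be_swap : be ^+ p = al by rewrite expp_be al_swap be_E opprB addrC subrK.
by rewrite dvdz_U_pchar !exprS al_swap be_swap mulrC.
Qed.

Lemma expp_fixed_of_sqr (y : int) : p != 2%N ->
  (p%:Z %| y ^+ 2 - disc a1 a2)%Z -> al ^+ p = al.
Proof.
move=> p_neq2; rewrite (dvdz_pcharf pK) rmorphB rmorphXn /= subr_eq0 => /eqP y_sqr.
have two_neq0 : (2 : K) != 0.
  by rewrite -(dvdn_pcharf pK) dvdn_prime2 ?(pcharf_prime pK).
have ab_fixed : (al - be) ^+ p = al - be.
  have /eqP : (al - be - y%:~R) * (al - be + y%:~R) = 0.
    have -> : (al - be - y%:~R) * (al - be + y%:~R) = (al - be) ^+ 2 - y%:~R ^+ 2 by ring.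
    by rewrite sqr_sub_roots y_sqr subrr.
  rewrite mulf_eq0 subr_eq0 addr_eq0 => /orP[] /eqP ->.
    by rewrite Frobenius_int.
  by rewrite -(pFrobenius_autE pK) rmorphN /= (pFrobenius_autE pK) Frobenius_int.
apply/eqP; rewrite -subr_eq0 -(mulrI_eq0 _ (mulfI two_neq0)); apply/eqP.
move: ab_fixed; rewrite -(pFrobenius_autE pK) rmorphB /= !(pFrobenius_autE pK) expp_be be_E.
by move=> /eqP; rewrite -subr_eq0 => /eqP <-; ring.
Qed.

Lemma sqr_of_expp_fixed (phi : {rmorphism 'F_p -> K}) : al ^+ p = al ->
  exists y : 'I_p, (p%:Z %| (y%:Z) ^+ 2 - disc a1 a2)%Z.
Proof.
have p_pr := pcharf_prime pK.
move=> /(Frobenius_fixed_Fp _ _ phi _ p_pr)[c phi_c].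
have [e phi_e] : exists e : 'F_p, phi e = al - be.
  by exists (2 * c - a1%:~R); rewrite rmorphB rmorphM /= rmorph_nat rmorph_int phi_c be_E; ring.
have e_sqr : e ^+ 2 = (disc a1 a2)%:~R.
  by apply: (fmorph_inj phi); rewrite rmorphXn phi_e sqr_sub_roots rmorph_int.
have e_lt_p : (e < p)%N by rewrite -[p in (_ < p)%N](Fp_cast p_pr) ltn_ord.
have val_e : (((e : nat)%:Z)%:~R : 'F_p) = e by rewrite -pmulrn natr_Zp.
exists (Ordinal e_lt_p); rewrite -Fp_intr_eq0 // rmorphB rmorphXn /=.
by rewrite val_e e_sqr subrr.
Qed.

End FrobeniusOnRoots.

Definition legendre_index (a1 a2 : int) (p : nat) : nat :=
  if legendre (disc a1 a2) p == 1 then p.-1 else p.+1.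

Lemma legendre_indexE a1 a2 p : prime p -> ~~ (p%:Z %| disc a1 a2)%Z ->
  (legendre_index a1 a2 p)%:Z = p%:Z - legendre (disc a1 a2) p.
Proof.
move=> p_pr pD; have p_gt0 := prime_gt0 p_pr.
have : legendre (disc a1 a2) p = 1 \/ legendre (disc a1 a2) p = -1.
  by rewrite /legendre (negbTE pD); do 2!case: ifP => _; auto.
by rewrite /legendre_index => -[] ->; rewrite ?eqxx /=; lia.
Qed.

Lemma dvdz2_disc a1 a2 : (2%:Z %| a1)%Z -> (2%:Z %| disc a1 a2)%Z.
Proof.
by move=> /dvdzP[k ->]; apply/dvdzP; exists (2 * k ^+ 2 + 2 * a2); rewrite /disc; ring.
Qed.

Lemma legendre_disc_2 a1 a2 : ~~ (2%:Z %| a2)%Z -> ~~ (2%:Z %| disc a1 a2)%Z ->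
  legendre (disc a1 a2) 2 = -1.
Proof.
move=> a2_odd D_odd; rewrite /legendre (negbTE D_odd) /=.
have a1_odd : ~~ (2%:Z %| a1)%Z := contra (@dvdz2_disc a1 a2) D_odd.
have [j a2E] : exists j, a2 = 2 * j + 1 by exists (a2 %/ 2)%Z; lia.
have [k [] a1E] : exists k, a1 = 4 * k + 1 \/ a1 = 4 * k + 3 by exists (a1 %/ 4)%Z; lia.
  have -> : disc a1 a2 = (2 * k ^+ 2 + k + j) * 8 + 5 by rewrite /disc a1E a2E; ring.
  by rewrite modzMDl.
have -> : disc a1 a2 = (2 * k ^+ 2 + 3 * k + j + 1) * 8 + 5 by rewrite /disc a1E a2E; ring.
by rewrite modzMDl.
Qed.

Lemma dvdz_U3_2 a1 a2 : ~~ (2%:Z %| a2)%Z -> ~~ (2%:Z %| disc a1 a2)%Z ->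
  (2%:Z %| U a1 a2 3)%Z.
Proof.
move=> a2_odd D_odd.
have a1_odd : ~~ (2%:Z %| a1)%Z := contra (@dvdz2_disc a1 a2) D_odd.
have [k a1E] : exists k, a1 = 2 * k + 1 by exists (a1 %/ 2)%Z; lia.
have [j a2E] : exists j, a2 = 2 * j + 1 by exists (a2 %/ 2)%Z; lia.
rewrite !U_rec U1 U0 a1E a2E; apply/dvdzP; exists (2 * k ^+ 2 + 2 * k + j + 1); ring.
Qed.

Lemma dvdz_U_legendre_index a1 a2 p : prime p ->
  ~~ (p%:Z %| a2)%Z -> ~~ (p%:Z %| disc a1 a2)%Z ->
  (p%:Z %| U a1 a2 (legendre_index a1 a2 p))%Z.
Proof.
move=> p_pr; case: (eqVneq p 2%N) => [-> a2_odd D_odd | p_neq2 p_a2 pD].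
  by rewrite /legendre_index legendre_disc_2 //=; apply: dvdz_U3_2.
have [K [phi _]] := @countable_algebraic_closure 'F_p.
have pK : p \in [pchar K] := rmorph_pchar phi (pchar_Fp p_pr).
have [al [be [sum_ab mul_ab]]] := closed_roots_sum_prod (a1%:~R : K) (- a2%:~R).
have a2_neq0 : a2%:~R != 0 :> K by rewrite -(dvdz_pcharf pK).
have al_neq_be : al != be.
  apply: contraNneq pD => al_be; rewrite (dvdz_pcharf pK) -(sqr_sub_roots sum_ab mul_ab).
  by rewrite al_be subrr expr0n.
rewrite /legendre_index /legendre (negbTE pD) (negbTE p_neq2).
case: existsP => [[y /(expp_fixed_of_sqr pK sum_ab mul_ab _ p_neq2) al_fixed] | no_sqr /=].
  by rewrite eqxx; apply: (dvdz_U_pred_of_fixed pK sum_ab mul_ab a2_neq0 al_neq_be).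
have [al_fixed | al_swap] := expp_al_fixed_or_swapped pK sum_ab mul_ab.
  have [y y_sqr] := sqr_of_expp_fixed pK sum_ab mul_ab phi al_fixed.
  by case: no_sqr; exists y.
exact: (dvdz_U_succ_of_swap pK sum_ab mul_ab al_neq_be).
Qed.

Lemma moebius_mul_prime q b : prime q -> (0 < b)%N -> coprime q b ->
  moebius (q * b) = - moebius b.
Proof.
move=> q_pr b_gt0 qb; have q_gt0 := prime_gt0 q_pr.
have q_notin_b : q \notin primes b by rewrite mem_primes q_pr b_gt0 /= -prime_coprime.
have primes_qb : perm_eq (primes (q * b)) (q :: primes b).
  apply: uniq_perm; rewrite /= ?q_notin_b ?primes_uniq // => r.
  by rewrite primesM // primes_prime // !inE.
have logn_qb r : r \in q :: primes b -> logn r (q * b) = (logn r b + (r == q))%N.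
  rewrite lognM // logn_prime // addnC; case: eqP => [-> _|//].
  by rewrite logn_coprime.
rewrite /moebius muln_gt0 q_gt0 b_gt0 (perm_size primes_qb) /= exprS.
rewrite (perm_all _ primes_qb) (eq_in_all (a2 := fun r => (logn r b + (r == q))%N == 1%N)).
  rewrite /= (logn_coprime qb) eqxx /=.
  rewrite (eq_in_all (a2 := fun r => logn r b == 1%N)); last first.
    move=> r rb; have -> : (r == q) = false by apply: contraNF q_notin_b => /eqP <-.
    by rewrite addn0.
  by case: all; rewrite ?mulN1r ?oppr0.
by move=> r /logn_qb ->.
Qed.

Lemma moebius_logn_gt1 a q : (1 < logn q a)%N -> moebius a = 0.
Proof.
move=> q_sqr; have q_a : q \in primes a by rewrite -logn_gt0 ltnW.
by rewrite /moebius; case: ifP => // /andP[_ /allP/(_ q q_a)]; rewrite gtn_eqF.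
Qed.

Lemma filter_coprime_divisors q k n : prime q -> (0 < n)%N -> coprime q n ->
  [seq a <- divisors (n * q ^ k) | ~~ (q %| a)%N] = divisors n.
Proof.
move=> q_pr n_gt0 qn; apply: (irr_sorted_eq ltn_trans ltnn).
- exact/sorted_filter/sorted_divisors_ltn/ltn_trans.
- exact: sorted_divisors_ltn.
move=> a; rewrite mem_filter -!dvdn_divisors ?muln_gt0 ?expn_gt0 ?(prime_gt0 q_pr) ?n_gt0 //.
apply/andP/idP => [[qa] | a_n].
  by rewrite Gauss_dvdl // coprimeXr // coprime_sym prime_coprime.
by rewrite dvdn_mulr // -prime_coprime // (coprime_dvdr a_n).
Qed.

Lemma filter_dvdn_divisors q n : (0 < q)%N -> (0 < n)%N -> (q %| n)%N ->
  [seq a <- divisors n | (q %| a)%N] = map (muln q) (divisors (n %/ q)).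
Proof.
move=> q_gt0 n_gt0 qn; have nq_gt0 : (0 < n %/ q)%N by rewrite divn_gt0 // dvdn_leq.
apply: (irr_sorted_eq ltn_trans ltnn).
- exact/sorted_filter/sorted_divisors_ltn/ltn_trans.
- by apply: homo_sorted (sorted_divisors_ltn _) => b c; rewrite ltn_pmul2l.
move=> a; rewrite mem_filter -dvdn_divisors //.
apply/andP/mapP => [[/dvdnP[b ->] a_n] | [b]].
  exists b; last exact: mulnC.
  by rewrite -dvdn_divisors // -(dvdn_pmul2r q_gt0) divnK.
rewrite -dvdn_divisors // => b_nq ->; split; first exact: dvdn_mulr.
by rewrite -(divnK qn) mulnC dvdn_pmul2r.
Qed.

Lemma sum_moebius_pfactor q k n (F : nat -> int) :
  prime q -> (0 < k)%N -> (0 < n)%N -> coprime q n ->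
  \sum_(a <- divisors (n * q ^ k)) moebius a * F a =
  \sum_(b <- divisors n) moebius b * (F b - F (q * b)%N).
Proof.
move=> q_pr k_gt0 n_gt0 qn; have q_gt0 := prime_gt0 q_pr.
have q_dvd : (q %| n * q ^ k)%N by rewrite dvdn_mull // dvdn_exp.
have div_q : (n * q ^ k %/ q = n * q ^ k.-1)%N.
  by rewrite -[in LHS](prednK k_gt0) expnS mulnCA mulKn.
have nqk_gt0 : (0 < n * q ^ k)%N by rewrite muln_gt0 expn_gt0 q_gt0 n_gt0.
have nq_gt0 : (0 < n * q ^ k.-1)%N by rewrite muln_gt0 expn_gt0 q_gt0 n_gt0.
rewrite (bigID (fun a => q %| a)%N) /= addrC -big_filter filter_coprime_divisors //.
rewrite -[X in _ + X]big_filter filter_dvdn_divisors // big_map div_q.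
rewrite [X in _ + X](bigID (fun b => q %| b)%N) /= -[X in _ + (_ + X)]big_filter.
rewrite filter_coprime_divisors // [X in _ + (X + _)]big1_seq ?add0r => [|b /andP[q_b]].
  rewrite -big_split /=; apply: eq_big_seq => b; rewrite -dvdn_divisors // => b_n.
  have b_gt0 : (0 < b)%N by apply: dvdn_gt0 b_n.
  by rewrite moebius_mul_prime // ?(coprime_dvdr b_n) // mulrBr mulNr.
rewrite -dvdn_divisors // => /(dvdn_gt0 nq_gt0) b_gt0.
rewrite (@moebius_logn_gt1 _ q) ?mul0r // lognM // logn_prime // eqxx add1n ltnS logn_gt0.
by rewrite mem_primes q_pr b_gt0 q_b.
Qed.

Lemma sum_moebius_dvdn d m : (0 < d)%N ->
  \sum_(a <- divisors d) moebius a * ((a %| m)%N : nat)%:Z = ((coprime d m) : nat)%:Z.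
Proof.
elim/ltn_ind: d => d IH d_gt0; case: (leqP d 1) => [d_le1 | d_gt1].
  have -> : d = 1%N by apply/eqP; rewrite eqn_leq d_le1.
  by rewrite (_ : divisors 1 = [:: 1%N]) // big_seq1 dvd1n coprime1n.
have q_pr := pdiv_prime d_gt1; set q := pdiv d in q_pr *.
have [n qn dE] := pfactor_coprime q_pr d_gt0; set k := logn q d in dE.
have k_gt0 : (0 < k)%N by rewrite logn_gt0 mem_primes q_pr d_gt0 pdiv_dvd.
have n_gt0 : (0 < n)%N by move: d_gt0; rewrite dE muln_gt0 => /andP[].
have n_lt_d : (n < d)%N.
  by rewrite dE ltn_Pmulr // -(expn0 q) ltn_exp2l ?prime_gt1.
have coprime_dE : coprime d m = coprime q m && coprime n m.
  by rewrite dE coprimeMl coprime_pexpl // andbC.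
rewrite dE sum_moebius_pfactor // -dE coprime_dE.
case: (boolP (coprime q m)) => qm /=.
  rewrite -IH //; apply: eq_bigr => b _.
  have -> : (q * b %| m)%N = false.
    by apply: contraTF qm => /(dvdn_trans (dvdn_mulr b (dvdnn q))); rewrite prime_coprime ?negbK.
  by rewrite subr0.
rewrite big_seq big1 // => b; rewrite -dvdn_divisors // => b_n.
rewrite Gauss_dvd ?(coprime_dvdr b_n) // -(negbK (q %| m)%N) -prime_coprime // qm /=.
by rewrite subrr mulr0.
Qed.

Lemma dinfE d v : (0 < d)%N -> dinf d v = \pi(d).-nat v.
Proof.
move=> d_gt0; rewrite /dinf /pnat; congr (_ && _); apply: eq_in_all => p.
by rewrite mem_primes /= -topredE /= mem_primes d_gt0 => /andP[->].
Qed.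

Lemma partn_eq_pnat d i v : (0 < d)%N -> (0 < i)%N -> \pi(d).-nat v ->
  ((v %| i) && coprime d (i %/ v))%N = (v == i`_\pi(d))%N.
Proof.
move=> d_gt0 i_gt0 v_pi; have v_gt0 : (0 < v)%N by case/andP: v_pi.
apply/idP/eqP => [/andP[v_i d_iv] | ->].
  have iv_gt0 : (0 < i %/ v)%N by rewrite divn_gt0 // dvdn_leq.
  by rewrite -(divnK v_i) mulnC partnM // part_pnat_id // part_p'nat ?muln1 // -coprime_pi'.
by rewrite dvdn_part -{1}(partnC \pi(d) i_gt0) mulKn // -{1}(partn_pi d_gt0) coprime_partC.
Qed.

Lemma sum_moebius_dvdn_mul d i v : (0 < d)%N -> (0 < i)%N -> \pi(d).-nat v ->
  \sum_(a <- divisors d) moebius a * ((a * v %| i)%N : nat)%:Z =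
  ((v == i`_\pi(d))%N : nat)%:Z.
Proof.
move=> d_gt0 i_gt0 v_pi; have v_gt0 : (0 < v)%N by case/andP: v_pi.
rewrite -partn_eq_pnat //; have [v_i | v_not_i] := boolP (v %| i)%N.
  rewrite -sum_moebius_dvdn //; apply: eq_bigr => a _.
  by rewrite -{1}(divnK v_i) dvdn_pmul2r.
rewrite big1 // => a _; rewrite (_ : (a * v %| i)%N = false) ?mulr0 //.
by apply: contraNF v_not_i; apply: dvdn_trans (dvdn_mull a (dvdnn v)).
Qed.

Lemma dvdn_mul_partn d i r : (0 < d)%N -> (0 < i)%N ->
  (d * i`_\pi(d) %| i * r)%N = (d %| r)%N.
Proof.
move=> d_gt0 i_gt0.
rewrite -{2}(partnC \pi(d) i_gt0) -mulnA [X in (_ %| X)%N]mulnC dvdn_pmul2r ?part_gt0 //.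
by rewrite Gauss_dvdr // -{1}(partn_pi d_gt0) coprime_partC.
Qed.

Lemma sum_dinf_moebius d i r N : (0 < d)%N -> (0 < i)%N -> (0 < r)%N -> (i * r < N)%N ->
  \sum_(v < N | dinf d v) \sum_(a <- divisors d)
     moebius a * (((d * v %| i * r) && (a * v %| i))%N : nat)%:Z = ((d %| r)%N : nat)%:Z.
Proof.
move=> d_gt0 i_gt0 r_gt0 irN; set w := (i`_\pi(d))%N.
have w_lt_N : (w < N)%N.
  have w_le_i : (w <= i)%N := dvdn_leq i_gt0 (dvdn_part _ _).
  by apply: leq_ltn_trans irN; rewrite (leq_trans w_le_i) ?leq_pmulr.
rewrite (eq_bigr (fun v : 'I_N => (((d * v %| i * r) && (v == w :> nat))%N : nat)%:Z)).
  rewrite (bigD1 (Ordinal w_lt_N)) ?dinfE ?part_pnat //= eqxx andbT.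
  rewrite big1 ?addr0 ?dvdn_mul_partn // => v /andP[_ v_neq_w].
  rewrite (_ : (v == w :> nat) = false) ?andbF //.
  by apply: contraNF v_neq_w => /eqP v_w; apply/eqP/val_inj.
move=> v; rewrite dinfE // => v_pi.
case: (d * v %| i * r)%N; last by rewrite big1 // => a _; rewrite mulr0.
exact: sum_moebius_dvdn_mul.
Qed.

Lemma sum_dinf_moebius_prime a1 a2 d p N : (0 < d)%N -> prime p -> (p.+1 < N)%N ->
  \sum_(v < N | dinf d v) \sum_(a <- divisors d) moebius a *
    ([&& ~~ (p%:Z %| a2 * disc a1 a2)%Z,
         (p%:Z == legendre (disc a1 a2) p %[mod (d * v)%N%:Z])%Z
       & ((a * v)%N%:Z %| iotaU a1 a2 p)%Z] : nat)%:Z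
  = ((~~ (p%:Z %| a2 * disc a1 a2)%Z && (d %| rho a1 a2 p)%N) : nat)%:Z.
Proof.
move=> d_gt0 p_pr pN; have [bad | good] /= := boolP (p%:Z %| a2 * disc a1 a2)%Z.
  by rewrite big1 // => v _; rewrite big1 // => a _; rewrite mulr0.
have p_a2 : ~~ (p%:Z %| a2)%Z by apply: contra good; apply: dvdz_mulr.
have pD : ~~ (p%:Z %| disc a1 a2)%Z by apply: contra good; apply: dvdz_mull.
set n := legendre_index a1 a2 p; set r := rho a1 a2 p.
have p_gt1 := prime_gt1 p_pr.
have [n_gt0 n_le] : (0 < n)%N /\ (n <= p.+1)%N by rewrite /n /legendre_index; case: ifP; lia.
have r_n : (r %| n)%N by apply: (rho_dvd p_pr p_a2 _ n_gt0); apply: dvdz_U_legendre_index.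
have r_gt0 : (0 < r)%N := dvdn_gt0 n_gt0 r_n.
have i_gt0 : (0 < n %/ r)%N by rewrite divn_gt0 // dvdn_leq.
have iotaE : iotaU a1 a2 p = (n %/ r)%N%:Z by rewrite /iotaU -legendre_indexE // divz_nat.
have modE m : (p%:Z == legendre (disc a1 a2) p %[mod m%:Z])%Z = (m %| n)%N.
  by rewrite eqz_mod_dvd -legendre_indexE.
rewrite -(sum_dinf_moebius d (n %/ r) r N d_gt0 i_gt0 r_gt0) divnK //; last by lia.
by apply: eq_bigr => v _; apply: eq_bigr => a _; rewrite modE iotaE.
Qed.

Lemma prime_countE (R : realType) (x : R) (P : pred nat) :
  (prime_count x P)%:Z =
  \sum_(p < (Num.truncn x).+1 | prime p && (p%:R <= x)) ((P p : nat)%:Z).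
Proof.
rewrite /prime_count (big_morph Posz PoszD (erefl _)) big_mkcondr /=.
by apply: eq_bigr => p _; case: (P p).
Qed.

Theorem lemma6p1 (a1 a2 : int) (ha1 : a1 != 0) (ha2 : a2 != 0)
  (hnotunity : forall alpha beta : algC,
     'X^2 - (a1%:~R) *: 'X - (a2%:~R)%:P = ('X - alpha%:P) * ('X - beta%:P) ->
     ~ exists n : nat, (0 < n)%N /\ (alpha / beta) ^+ n = 1)
  (hnotsq : ~ exists z : int, z ^+ 2 = disc a1 a2)
  (d : nat) (hd : (0 < d)%N) (R : realType) (x : R) (hx : 1 < x) :
  exists N0 : nat, forall N : nat, (N0 <= N)%N ->
    (RU a1 a2 d x)%:Z =
      \sum_(v < N | dinf d v) \sum_(a <- divisors d)
          moebius a * (piU a1 a2 (d * v) (a * v) x)%:Z.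
Proof.
exists (Num.truncn x).+2 => N N_large.
under eq_bigr => v _ do under eq_bigr => a _ do rewrite /piU prime_countE mulr_sumr.
rewrite /RU prime_countE.
under [RHS]eq_bigr => v _ do rewrite exchange_big /=.
rewrite exchange_big /=; apply: eq_bigr => p /andP[p_pr _].
rewrite sum_dinf_moebius_prime //.
by apply: leq_trans N_large; rewrite ltnS ltn_ord.
Qed.
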